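(* For every integer $N\ge16$ and $\rho\in[2/3,1)$ there is $C<\infty$ such that for every interval $I\subset\mathbb R$, $$\int_I\big|H_\flat(\mathbf 1_I\widehat\omega)\big|^2\,d\widehat{\dot\sigma}=\sum_{k,j:\dot z^k_j\in I}\widehat s^k_j\,\big|H_\flat(\mathbf 1_I\widehat\omega)(\dot z^k_j)\big|^2\le C\,\widehat\omega(I).$$
   Context: Cantor intervals: fix an integer $N\ge16$ and $\rho\in[2/3,1)$. Set $I^0_1=[0,1]$. Each interval $I=[a,a+N^{-k}]$ of generation $k$ has two children of generation $k+1$: the left child $I_-=[a,a+N^{-k-1}]$ and the right child $I_+=[a+N^{-k}-N^{-k-1},a+N^{-k}]$. The $2^k$ intervals of generation $k$ are denoted $I^k_j$, $1\le j\le 2^k$, numbered left to right; $\mathcal D$ is the collection of all of them. $\dot z^k_j$ is the center of $I^k_j$. The Cantor set is $\mathsf E^{(N)}=\bigcap_{k}\bigcup_{j}I^k_j$. Redistributed Cantor measure: with $\eta=1/N$, $\widehat\omega$ is the unique Borel probability measure supported on $\mathsf E^{(N)}$ such that $\widehat\omega(I^1_1)=\widehat\omega(I^1_2)=\frac12$ and for every $I\in\mathcal D$ of generation $\ge1$: if $I$ is the left child of its parent then $\widehat\omega(I_-)=\frac{1+\eta}2\widehat\omega(I)$, $\widehat\omega(I_+)=\frac{1-\eta}2\widehat\omega(I)$; if $I$ is the right child of its parent then $\widehat\omega(I_-)=\frac{1-\eta}2\widehat\omega(I)$, $\widehat\omega(I_+)=\frac{1+\eta}2\widehat\omega(I)$.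 Weights: $\widehat s^k_j=N^{-2k}/\widehat\omega(I^k_j)$; $\widehat{\dot\sigma}=\sum_{k\ge0}\sum_{j=1}^{2^k}\widehat s^k_j\,\delta_{\dot z^k_j}$. Flattened kernel: $K_\flat$ is defined first on $[N^{-1/2},N^{1/2}]$ as a smooth nonincreasing function with values in $[N^{-1/2},N^{1/2}]$ such that $K_\flat(x)=1/x$ for $N^{-1/2}\le x\le(\rho N)^{-1/2}$ and for $(\rho N)^{1/2}\le x\le N^{1/2}$, and $K_\flat(x)=1$ for $(\rho^2N)^{-1/2}\le x\le(\rho^2N)^{1/2}$; then extended to $(0,\infty)$ by $K_\flat(x)=N^{-k}K_\flat(N^{-k}x)$ for $x\in[N^{k-1/2},N^{k+1/2}]$, $k\in\mathbb Z$, and to $\mathbb R\setminus\{0\}$ as an odd function. $H_\flat\mu(x)=\int K_\flat(x-y)\,d\mu(y)$. *)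

From Stdlib Require Import Reals Lra ClassicalEpsilon.
Open Scope R_scope.

Fixpoint fsum (n : nat) (f : nat -> R) : R :=
  match n with O => 0 | S m => fsum m f + f m end.

(* Left endpoint of I^k_{j+1} (0-based index j, 0 <= j < 2^k). *)
Fixpoint cleft (N : nat) (k j : nat) : R :=
  match k with
  | O => 0
  | S k' => cleft N k' (Nat.div2 j)
            + (if Nat.odd j then / INR N ^ k' - / INR N ^ (S k') else 0)
  end.

(* Redistributed Cantor measure of the cylinder I^k_{j+1}. *)
Fixpoint omega_cyl (N : nat) (k j : nat) : R :=
  match k with
  | O => 1
  | S O => / 2
  | S ((S _) as k1) =>
      omega_cyl N k1 (Nat.div2 j) *
      (if Bool.eqb (Nat.odd j) (Nat.odd (Nat.div2 j))
       then (1 + / INR N) / 2 else (1 - / INR N) / 2)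
  end.

Definition center (N k j : nat) : R := cleft N k j + / INR N ^ k / 2.
Definition weight (N k j : nat) : R := / INR N ^ (2 * k) / omega_cyl N k j.

Definition is_interval (I : R -> Prop) : Prop :=
  forall x y z, I x -> I z -> x <= y <= z -> I y.

Definition ind (P : Prop) : R :=
  if excluded_middle_informative P then 1 else 0.

(* classical limit of a real sequence (0 if it does not converge) *)
Definition lim (u : nat -> R) : R :=
  match excluded_middle_informative (exists l, Un_cv u l) with
  | left H => proj1_sig (constructive_indefinite_description _ H)
  | right _ => 0
  end.

Definition cyl_in (N : nat) (I : R -> Prop) (n j : nat) : Prop :=
  forall y, cleft N n j <= y <= cleft N n j + / INR N ^ n -> I y.

(* generation-n approximation of  \int 1_I f d\hat\omega  *)
Definition omega_approx (N : nat) (I : R -> Prop) (f : R -> R) (n : nat) : R :=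
  fsum (2 ^ n) (fun j => ind (cyl_in N I n j) * f (cleft N n j) * omega_cyl N n j).

Definition omega_hat (N : nat) (I : R -> Prop) : R :=
  lim (omega_approx N I (fun _ => 1)).
Definition H_flat (N : nat) (K : R -> R) (I : R -> Prop) (x : R) : R :=
  lim (omega_approx N I (fun y => K (x - y))).

(* partial sums (generations 0..K0) of  sum_{k,j : z^k_j in I} s^k_j |H_flat(1_I w)(z^k_j)|^2 *)
Definition sigma_partial (N : nat) (K : R -> R) (I : R -> Prop) (K0 : nat) : R :=
  fsum (S K0) (fun k => fsum (2 ^ k) (fun j =>
    ind (I (center N k j)) * weight N k j * (H_flat N K I (center N k j)) ^ 2)).

Definition is_flat_kernel (N : nat) (rho : R) (K : R -> R) : Prop :=
  let n := INR N in
  let lo := / sqrt n in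
  let hi := sqrt n in
  (exists D : nat -> R -> R, D O = K /\
     forall m x, lo < x < hi -> derivable_pt_lim (D m) x (D (S m) x)) /\
  (forall x y, lo <= x -> x <= y -> y <= hi -> K y <= K x) /\
  (forall x, lo <= x <= hi -> lo <= K x <= hi) /\
  (forall x, lo <= x <= / sqrt (rho * n) -> K x = / x) /\
  (forall x, sqrt (rho * n) <= x <= hi -> K x = / x) /\
  (forall x, / sqrt (rho ^ 2 * n) <= x <= sqrt (rho ^ 2 * n) -> K x = 1) /\
  (forall (k : Z) x, powerRZ n k / sqrt n <= x <= powerRZ n k * sqrt n ->
       K x = powerRZ n (- k) * K (powerRZ n (- k) * x)) /\
  (forall x, 0 < x -> K (- x) = - K x).

(* At the center z of I^k_j, for every ancestor I^m_q of I^k_j the kernel K(z - .) is the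
   constant +-N^m on the sibling of the child of I^m_q containing z (flatness and scaling of K).
   By the redistribution of omega, H_flat(1_{I^m_q} omega) takes the same value at every center
   inside I^m_q.  Peeling off the ancestors one by one, |H_flat(1_I omega)(z)| is therefore
   bounded by the sum of N^m omega(I /\ I^m_q) over the ancestors I^m_q that meet I without
   being covered by it.  The weights s^k_j decrease by a factor at least 8 from a cylinder to
   its children, so a Hardy inequality on the binary tree bounds the sum of s^k_j times the
   squared path sums by 4 sum_J omega(I /\ J)^2 / omega(J) over partially covered J.  Such a
   J contains an endpoint of I, at most two per generation, and along the chain of cylinders
   containing a given endpoint omega decreases geometrically; this gives (512/15) omega(I).
   Everything is proved for the generation-n approximations and passed to the limit. *)

From Stdlib Require Import Reals Lra Lia Psatz Classical ClassicalEpsilon.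
Open Scope R_scope.

Lemma fsum_ext n f g : (forall i, (i < n)%nat -> f i = g i) -> fsum n f = fsum n g.
Proof.
  induction n as [|n IH]; intros H; simpl; [reflexivity|].
  rewrite IH by (intros; apply H; lia); rewrite H by lia; reflexivity.
Qed.

Lemma fsum_le n f g : (forall i, (i < n)%nat -> f i <= g i) -> fsum n f <= fsum n g.
Proof.
  induction n as [|n IH]; intros H; simpl; [lra|].
  assert (f n <= g n) by (apply H; lia).
  assert (fsum n f <= fsum n g) by (apply IH; intros; apply H; lia).
  lra.
Qed.

Lemma fsum_const0 n : fsum n (fun _ => 0) = 0.
Proof. induction n as [|n IH]; simpl; [|rewrite IH]; lra. Qed.

Lemma fsum_nonneg n f : (forall i, (i < n)%nat -> 0 <= f i) -> 0 <= fsum n f.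
Proof. intros H. rewrite <- (fsum_const0 n). now apply fsum_le. Qed.

Lemma fsum_add n f g : fsum n (fun i => f i + g i) = fsum n f + fsum n g.
Proof. induction n as [|n IH]; simpl; [|rewrite IH]; lra. Qed.

Lemma fsum_scal n c f : fsum n (fun i => c * f i) = c * fsum n f.
Proof. induction n as [|n IH]; simpl; [|rewrite IH]; lra. Qed.

Lemma fsum_app a b f : fsum (a + b) f = fsum a f + fsum b (fun i => f (a + i)%nat).
Proof.
  induction b as [|b IH]; simpl; [rewrite Nat.add_0_r; lra|].
  rewrite Nat.add_succ_r; simpl; rewrite IH; lra.
Qed.

Lemma fsum_succ_l n f : fsum (S n) f = f O + fsum n (fun i => f (S i)).
Proof. induction n as [|n IH]; simpl in *; [|rewrite IH]; lra. Qed.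

Lemma fsum_double n f :
  fsum (2 * n) f = fsum n (fun i => f (2 * i)%nat + f (2 * i + 1)%nat).
Proof.
  induction n as [|n IH]; [reflexivity|].
  replace (2 * S n)%nat with (S (S (2 * n))) by lia.
  simpl; simpl in IH; rewrite IH.
  replace (S (n + (n + 0)))%nat with (n + (n + 0) + 1)%nat by lia; lra.
Qed.

Lemma fsum_pos_ex n f : 0 < fsum n f -> exists i, (i < n)%nat /\ 0 < f i.
Proof.
  intros H; apply NNPP; intros Hno.
  assert (fsum n f <= 0); [|lra].
  rewrite <- (fsum_const0 n); apply fsum_le; intros i Hi.
  apply Rnot_lt_le; intros Hf; apply Hno; eauto.
Qed.

Lemma fsum_lt_ex n f g : fsum n f < fsum n g -> exists i, (i < n)%nat /\ f i < g i.
Proof.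
  intros H; apply NNPP; intros Hno.
  assert (fsum n g <= fsum n f); [|lra].
  apply fsum_le; intros i Hi.
  apply Rnot_lt_le; intros Hf; apply Hno; eauto.
Qed.

Lemma fsum_lt n f g i : (forall i, (i < n)%nat -> f i <= g i) ->
  (i < n)%nat -> f i < g i -> fsum n f < fsum n g.
Proof.
  induction n as [|n IH]; intros Hle Hi Hlt; [lia|]; simpl.
  assert (Hn : f n <= g n) by (apply Hle; lia).
  assert (fsum n f <= fsum n g) by (apply fsum_le; intros; apply Hle; lia).
  destruct (Nat.eq_dec i n) as [->|Hne]; [lra|].
  assert (fsum n f < fsum n g) by (apply IH; auto; lia). lra.
Qed.

Lemma fsum_cv len (u : nat -> nat -> R) l :
  (forall i, (i < len)%nat -> Un_cv (fun n => u n i) (l i)) ->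
  Un_cv (fun n => fsum len (u n)) (fsum len l).
Proof.
  induction len as [|len IH]; intros H; simpl.
  - intros eps Heps; exists O; intros; unfold Rdist; rewrite Rminus_diag, Rabs_R0; lra.
  - apply CV_plus; [apply IH; intros|]; apply H; lia.
Qed.

Definition block_sum (g : nat -> R) (p q : nat) : R :=
  fsum (2 ^ p) (fun i => g (q * 2 ^ p + i)%nat).

Lemma block_sum_S g p q :
  block_sum g (S p) q = block_sum g p (2 * q) + block_sum g p (2 * q + 1).
Proof.
  unfold block_sum; rewrite Nat.pow_succ_r'.
  replace (2 * 2 ^ p)%nat with (2 ^ p + 2 ^ p)%nat by lia.
  rewrite fsum_app; f_equal; apply fsum_ext; intros i Hi; f_equal; nia.
Qed.

Lemma block_sum_double g p q :
  block_sum g (S p) q = block_sum (fun i => g (2 * i)%nat + g (2 * i + 1)%nat) p q.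
Proof.
  revert q; induction p as [|p IH]; intros q.
  - unfold block_sum; simpl.
    replace (q * 2 + 0)%nat with (q * 1 + 0 + (q * 1 + 0 + 0))%nat by lia.
    replace (q * 2 + 1)%nat with (q * 1 + 0 + (q * 1 + 0 + 0) + 1)%nat by lia; lra.
  - rewrite block_sum_S, !IH, block_sum_S; reflexivity.
Qed.

Lemma block_sum_div p q i : (i < 2 ^ p)%nat -> ((q * 2 ^ p + i) / 2 ^ p)%nat = q.
Proof.
  intros Hi; rewrite Nat.add_comm, Nat.div_add by (apply Nat.pow_nonzero; lia).
  rewrite Nat.div_small by exact Hi; reflexivity.
Qed.

Lemma Un_cv_eventually u v l p : (forall n, (p <= n)%nat -> u n = v n) -> Un_cv v l -> Un_cv u l.
Proof.
  intros H Hv eps Heps; destruct (Hv eps Heps) as [M HM].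
  exists (Nat.max M p); intros n Hn; rewrite H by lia; apply HM; lia.
Qed.

Lemma Un_cv_scal c u l : Un_cv u l -> Un_cv (fun n => c * u n) (c * l).
Proof.
  apply CV_mult; intros eps Heps; exists O; intros.
  unfold Rdist; rewrite Rminus_diag, Rabs_R0; lra.
Qed.

Lemma Un_cv_sq u l : Un_cv u l -> Un_cv (fun n => u n ^ 2) (l ^ 2).
Proof.
  intros H; replace (l ^ 2) with (l * l) by ring.
  apply (Un_cv_eventually _ (fun n => u n * u n) _ O); [intros; ring|].
  now apply CV_mult.
Qed.

Lemma lim_eq u l : Un_cv u l -> lim u = l.
Proof.
  intros H; unfold lim; destruct excluded_middle_informative as [E|E].
  - destruct (constructive_indefinite_description _ E) as [l' Hl']; simpl.
    eapply UL_sequence; eauto.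
  - exfalso; eauto.
Qed.

Lemma ind_true (P : Prop) : P -> ind P = 1.
Proof. intros H; unfold ind; destruct excluded_middle_informative; tauto. Qed.

Lemma ind_false (P : Prop) : ~ P -> ind P = 0.
Proof. intros H; unfold ind; destruct excluded_middle_informative; tauto. Qed.

Lemma ind_bounds (P : Prop) : 0 <= ind P <= 1.
Proof. unfold ind; destruct excluded_middle_informative; lra. Qed.

Lemma ind_add_le (A B C : Prop) : (A -> C) -> (B -> C) -> ~ (A /\ B) -> ind A + ind B <= ind C.
Proof.
  intros HA HB HAB; pose proof (ind_bounds C).
  destruct (classic A) as [a|a]; destruct (classic B) as [b|b];
    rewrite ?(ind_true A), ?(ind_false A), ?(ind_true B), ?(ind_false B),
      ?(ind_true C) by auto; tauto || lra.
Qed.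

(** * Sums along the paths of the binary tree *)

Section PathSum.

Variable a : nat -> nat -> R.

(* Sum of [a] along the ancestors of the node [j] of generation [m + d],
   from generation [m] down to [j] itself. *)
Definition path_sum (m d j : nat) : R :=
  fsum (S d) (fun t => a (m + t)%nat (j / 2 ^ (d - t))%nat).

Lemma path_sum_0 m j : path_sum m 0 j = a m j.
Proof.
  unfold path_sum; cbn [fsum].
  rewrite Nat.add_0_r, Nat.sub_0_r, Nat.pow_0_r, Nat.div_1_r; ring.
Qed.

Lemma path_sum_top m d j : path_sum m (S d) j = a m (j / 2 ^ S d)%nat + path_sum (S m) d j.
Proof.
  unfold path_sum; rewrite fsum_succ_l, Nat.add_0_r, Nat.sub_0_r; f_equal.
  apply fsum_ext; intros t _; f_equal; lia.
Qed.

Lemma path_sum_bottom k j : path_sum 0 (S k) j = path_sum 0 k (Nat.div2 j) + a (S k) j.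
Proof.
  unfold path_sum; change (fsum (S (S k)) ?f) with (fsum (S k) f + f (S k)); cbv beta.
  rewrite Nat.sub_diag, Nat.pow_0_r, Nat.div_1_r; f_equal; apply fsum_ext; intros t Ht; f_equal.
  replace (S k - t)%nat with (S (k - t)) by lia.
  rewrite Nat.pow_succ_r', Nat.div2_div, Nat.Div0.div_div, Nat.mul_comm; reflexivity.
Qed.

Lemma path_sum_nonneg m d j : (forall t q, 0 <= a t q) -> 0 <= path_sum m d j.
Proof. intros Ha; apply fsum_nonneg; intros; apply Ha. Qed.

End PathSum.

Section WeightedPathSum.

Variables a w : nat -> nat -> R.
Hypothesis w_nonneg : forall k j, 0 <= w k j.
Hypothesis w_child : forall k c, w (S k) c <= / 8 * w k (Nat.div2 c).

Let path_energy k := fsum (2 ^ k) (fun j => w k j * path_sum a 0 k j ^ 2).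
Let node_energy k := fsum (2 ^ k) (fun j => w k j * a k j ^ 2).

(* [(b + x)^2 <= 2 b^2 + 2 x^2], and the two children of a node carry at most a quarter
   of its weight. *)
Lemma path_energy_S k : path_energy (S k) <= 2 * node_energy (S k) + / 2 * path_energy k.
Proof.
  unfold path_energy, node_energy; rewrite Nat.pow_succ_r', !fsum_double.
  rewrite <- !fsum_scal, <- fsum_add; apply fsum_le; intros i _.
  rewrite !path_sum_bottom, Nat.div2_double, Nat.div2_odd'.
  pose proof (w_child k (2 * i)) as H0; pose proof (w_child k (2 * i + 1)) as H1.
  rewrite Nat.div2_double in H0; rewrite Nat.div2_odd' in H1.
  pose proof (w_nonneg (S k) (2 * i)); pose proof (w_nonneg (S k) (2 * i + 1)).
  set (b := path_sum a 0 k i).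
  assert (Hsq : forall x, (b + x) ^ 2 <= 2 * b ^ 2 + 2 * x ^ 2)
    by (intros x; pose proof (pow2_ge_0 (b - x)); nra).
  pose proof (Hsq (a (S k) (2 * i))); pose proof (Hsq (a (S k) (2 * i + 1))).
  pose proof (pow2_ge_0 b); nra.
Qed.

Lemma weighted_path_sum_sq K :
  fsum (S K) path_energy <= 4 * fsum (S K) node_energy.
Proof.
  enough (H : fsum (S K) path_energy + path_energy K <= 4 * fsum (S K) node_energy).
  { assert (0 <= path_energy K); [|lra].
    apply fsum_nonneg; intros; pose proof (w_nonneg K i); nra. }
  induction K as [|K IH].
  - unfold path_energy, node_energy; simpl; rewrite path_sum_0.
    pose proof (w_nonneg 0 0); pose proof (pow2_ge_0 (a 0 0)); nra.
  - change (fsum (S (S K)) ?f) with (fsum (S K) f + f (S K)).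
    pose proof (path_energy_S K); lra.
Qed.

End WeightedPathSum.

(** * Cantor cylinders and the redistributed measure *)

Section Cantor.

Variable N : nat.
Hypothesis HN : (16 <= N)%nat.

Lemma INR_N_ge16 : 16 <= INR N.
Proof. apply le_INR in HN; simpl in HN; lra. Qed.

Lemma inv_pow_pos m : 0 < / INR N ^ m.
Proof. pose proof INR_N_ge16. apply Rinv_0_lt_compat, pow_lt; lra. Qed.

Lemma inv_pow_S_le m : / INR N ^ S m <= / INR N ^ m / 16.
Proof.
  pose proof INR_N_ge16; pose proof (inv_pow_pos m).
  simpl; rewrite Rinv_mult; unfold Rdiv; rewrite Rmult_comm.
  apply Rmult_le_compat_l; [lra|]; apply Rinv_le_contravar; lra.
Qed.

Definition in_cyl (m q : nat) (y : R) : Prop :=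
  cleft N m q <= y <= cleft N m q + / INR N ^ m.

Lemma cleft_in_cyl m q : in_cyl m q (cleft N m q).
Proof. pose proof (inv_pow_pos m); unfold in_cyl; lra. Qed.

Lemma center_in_cyl m q : in_cyl m q (center N m q).
Proof. pose proof (inv_pow_pos m); unfold in_cyl, center; lra. Qed.

Lemma cleft_S m c : cleft N (S m) c =
  cleft N m (Nat.div2 c) + (if Nat.odd c then / INR N ^ m - / INR N ^ S m else 0).
Proof. reflexivity. Qed.

Lemma cleft_left m q : cleft N (S m) (2 * q) = cleft N m q.
Proof. rewrite cleft_S, Nat.div2_double, Nat.odd_even; lra. Qed.

Lemma cleft_right m q :
  cleft N (S m) (2 * q + 1) = cleft N m q + (/ INR N ^ m - / INR N ^ S m).
Proof. rewrite cleft_S, Nat.div2_odd', Nat.odd_odd; reflexivity. Qed.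

Lemma in_cyl_left m q y :
  in_cyl (S m) (2 * q) y <-> cleft N m q <= y <= cleft N m q + / INR N ^ S m.
Proof. unfold in_cyl; rewrite cleft_left; tauto. Qed.

Lemma in_cyl_right m q y : in_cyl (S m) (2 * q + 1) y <->
  cleft N m q + / INR N ^ m - / INR N ^ S m <= y <= cleft N m q + / INR N ^ m.
Proof. unfold in_cyl; rewrite cleft_right; split; intros; lra. Qed.

Lemma in_cyl_parent m c y : in_cyl (S m) c y -> in_cyl m (Nat.div2 c) y.
Proof.
  pose proof (inv_pow_S_le m); pose proof (inv_pow_pos (S m)).
  rewrite (Nat.div2_odd c) at 1; destruct (Nat.odd c); simpl Nat.b2n;
    rewrite ?Nat.add_0_r, ?in_cyl_left, ?in_cyl_right; unfold in_cyl; lra.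
Qed.

Lemma in_cyl_ancestor m d c y : in_cyl (m + d) c y -> in_cyl m (c / 2 ^ d) y.
Proof.
  revert c; induction d as [|d IH]; intros c H.
  - rewrite Nat.pow_0_r, Nat.div_1_r; rewrite Nat.add_0_r in H; exact H.
  - rewrite Nat.add_succ_r in H; apply in_cyl_parent, IH in H.
    rewrite Nat.div2_div, Nat.Div0.div_div in H; rewrite Nat.pow_succ_r'; exact H.
Qed.

Lemma in_cyl_block m p q i y : (i < 2 ^ p)%nat ->
  in_cyl (m + p) (q * 2 ^ p + i) y -> in_cyl m q y.
Proof. intros Hi H; apply in_cyl_ancestor in H; rewrite block_sum_div in H; auto. Qed.

Lemma in_cyl_left_lt_right m q x y :
  in_cyl (S m) (2 * q) x -> in_cyl (S m) (2 * q + 1) y -> x < y.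
Proof.
  pose proof (inv_pow_S_le m); pose proof (inv_pow_pos (S m)).
  rewrite in_cyl_left, in_cyl_right; lra.
Qed.

(* The child on side [b] of I^k_p gets the larger share iff it lies on the same side as I^k_p. *)
Definition child_ratio (k p : nat) (b : bool) : R :=
  match k with
  | O => / 2
  | S _ => if Bool.eqb b (Nat.odd p) then (1 + / INR N) / 2 else (1 - / INR N) / 2
  end.

Lemma omega_cyl_S k c :
  omega_cyl N (S k) c = omega_cyl N k (Nat.div2 c) * child_ratio k (Nat.div2 c) (Nat.odd c).
Proof. destruct k; simpl; [lra|reflexivity]. Qed.

Lemma child_ratio_bounds k p b : 15 / 32 <= child_ratio k p b <= 17 / 32.
Proof.
  pose proof INR_N_ge16.
  assert (0 < / INR N <= / 16) by (split; [apply Rinv_0_lt_compat|apply Rinv_le_contravar]; lra).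
  destruct k; simpl; [lra|]; destruct Bool.eqb; lra.
Qed.

Lemma child_ratio_sum k p : child_ratio k p false + child_ratio k p true = 1.
Proof. destruct k; simpl; [lra|]; destruct (Nat.odd p); simpl; lra. Qed.

Lemma omega_cyl_pos k c : 0 < omega_cyl N k c.
Proof.
  revert c; induction k as [|k IH]; intros c; [simpl; lra|].
  rewrite omega_cyl_S.
  pose proof (child_ratio_bounds k (Nat.div2 c) (Nat.odd c)); pose proof (IH (Nat.div2 c)); nra.
Qed.

Lemma omega_cyl_left k q : omega_cyl N (S k) (2 * q) = omega_cyl N k q * child_ratio k q false.
Proof. rewrite omega_cyl_S, Nat.div2_double, Nat.odd_even; reflexivity. Qed.

Lemma omega_cyl_right k q : omega_cyl N (S k) (2 * q + 1) = omega_cyl N k q * child_ratio k q true.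
Proof. rewrite omega_cyl_S, Nat.div2_odd', Nat.odd_odd; reflexivity. Qed.

Lemma omega_cyl_children k q :
  omega_cyl N (S k) (2 * q) + omega_cyl N (S k) (2 * q + 1) = omega_cyl N k q.
Proof. rewrite omega_cyl_left, omega_cyl_right, <- Rmult_plus_distr_l, child_ratio_sum; ring. Qed.

Lemma omega_cyl_child_bounds k c :
  15 / 32 * omega_cyl N k (Nat.div2 c) <= omega_cyl N (S k) c
  <= 17 / 32 * omega_cyl N k (Nat.div2 c).
Proof.
  rewrite omega_cyl_S; pose proof (child_ratio_bounds k (Nat.div2 c) (Nat.odd c)).
  pose proof (omega_cyl_pos k (Nat.div2 c)); nra.
Qed.

Definition sibling (c : nat) : nat := if Nat.odd c then pred c else S c.
Definition side (c : nat) : R := if Nat.odd c then -1 else 1.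

Lemma sibling_left q : sibling (2 * q) = (2 * q + 1)%nat.
Proof. unfold sibling; rewrite Nat.odd_even; lia. Qed.

Lemma sibling_right q : sibling (2 * q + 1) = (2 * q)%nat.
Proof. unfold sibling; rewrite Nat.odd_odd; lia. Qed.

Lemma side_left q : side (2 * q) = 1.
Proof. unfold side; rewrite Nat.odd_even; reflexivity. Qed.

Lemma side_right q : side (2 * q + 1) = -1.
Proof. unfold side; rewrite Nat.odd_odd; reflexivity. Qed.

Lemma Rabs_side c : Rabs (side c) = 1.
Proof. unfold side; destruct Nat.odd; [rewrite Rabs_left|rewrite Rabs_right]; lra. Qed.

Ltac case_child c :=
  destruct (Nat.Even_or_Odd c) as [[?q ->]|[?q ->]];
  rewrite ?Nat.div2_double, ?Nat.div2_odd', ?sibling_left, ?sibling_right,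
    ?side_left, ?side_right.

(* The value of H_flat(1_{I^m_q} omega) at every center inside I^m_q: by the redistribution
   of omega it does not depend on the center (see [cyl_hilbert_child]). *)
Definition cyl_hilbert (m q : nat) : R :=
  INR N ^ m * (omega_cyl N (S m) (2 * q) - omega_cyl N (S m) (2 * q + 1)).

Lemma cyl_hilbert_child m c :
  cyl_hilbert (S m) c = side c * INR N ^ m * omega_cyl N (S m) c.
Proof.
  pose proof INR_N_ge16; unfold cyl_hilbert.
  rewrite omega_cyl_left, omega_cyl_right; unfold child_ratio.
  case_child c; rewrite ?Nat.odd_even, ?Nat.odd_odd; simpl Bool.eqb; cbv iota;
    simpl pow; field; lra.
Qed.

Lemma cyl_hilbert_parent m c : cyl_hilbert m (Nat.div2 c) =
  side c * INR N ^ m * (omega_cyl N (S m) c - omega_cyl N (S m) (sibling c)).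
Proof. unfold cyl_hilbert; case_child c; ring. Qed.

Lemma ancestor_S j d : (j / 2 ^ S d)%nat = Nat.div2 (j / 2 ^ d).
Proof. rewrite Nat.div2_div, Nat.Div0.div_div, Nat.pow_succ_r', Nat.mul_comm; reflexivity. Qed.

Lemma center_in_ancestor m d j : in_cyl m (j / 2 ^ d) (center N (m + d) j).
Proof. apply in_cyl_ancestor, center_in_cyl. Qed.

Lemma cyl_hilbert_root : cyl_hilbert 0 0 = 0.
Proof. unfold cyl_hilbert; simpl; lra. Qed.

(* The generation-[n] approximation of the integral of [1_I f] against omega over I^m_q:
   only the generation-[n] cylinders inside [I] count, with [f] taken at their left ends. *)
Definition cyl_integral (n : nat) (I : R -> Prop) (f : R -> R) (m q : nat) : R :=
  block_sum (fun i => ind (cyl_in N I n i) * f (cleft N n i) * omega_cyl N n i) (n - m) q.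

Notation cyl_measure n I := (cyl_integral n I (fun _ => 1)).

Definition setT : R -> Prop := fun _ => True.

Lemma cyl_in_setT n i : cyl_in N setT n i.
Proof. intros y _; exact Logic.I. Qed.

Lemma omega_approx_cyl_integral I f n : omega_approx N I f n = cyl_integral n I f 0 0.
Proof.
  unfold omega_approx, cyl_integral, block_sum; rewrite Nat.sub_0_r.
  apply fsum_ext; reflexivity.
Qed.

Lemma cyl_in_children I n i :
  cyl_in N I n i -> cyl_in N I (S n) (2 * i) /\ cyl_in N I (S n) (2 * i + 1).
Proof.
  intros H; split; intros y Hy; apply H; apply in_cyl_parent in Hy;
    rewrite ?Nat.div2_double, ?Nat.div2_odd' in Hy; exact Hy.
Qed.

Section Generation.

Variable n : nat.

Lemma cyl_integral_split I f m q : (m < n)%nat ->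
  cyl_integral n I f m q = cyl_integral n I f (S m) (2 * q) + cyl_integral n I f (S m) (2 * q + 1).
Proof.
  intros H; unfold cyl_integral; replace (n - m)%nat with (S (n - S m)) by lia.
  apply block_sum_S.
Qed.

Lemma cyl_integral_const I f c m q : (m <= n)%nat -> (forall y, in_cyl m q y -> f y = c) ->
  cyl_integral n I f m q = c * cyl_measure n I m q.
Proof.
  intros Hmn Hf; unfold cyl_integral, block_sum; rewrite <- fsum_scal.
  apply fsum_ext; intros i Hi; rewrite Hf; [ring|].
  apply (in_cyl_block m (n - m) q i); [exact Hi|].
  replace (m + (n - m))%nat with n by lia; apply cleft_in_cyl.
Qed.

Lemma cyl_measure_nonneg I m q : 0 <= cyl_measure n I m q.
Proof.
  apply fsum_nonneg; intros i _; pose proof (ind_bounds (cyl_in N I n (q * 2 ^ (n - m) + i))).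
  pose proof (omega_cyl_pos n (q * 2 ^ (n - m) + i)); nra.
Qed.

Lemma cyl_measure_setT m q : (m <= n)%nat -> cyl_measure n setT m q = omega_cyl N m q.
Proof.
  intros Hmn; remember (n - m)%nat as d eqn:Hd; revert m q Hmn Hd.
  induction d as [|d IH]; intros m q Hmn Hd.
  - replace m with n by lia; unfold cyl_integral, block_sum; rewrite Nat.sub_diag; simpl.
    rewrite (ind_true _ (cyl_in_setT _ _)),  Nat.mul_1_r, Nat.add_0_r; ring.
  - rewrite cyl_integral_split, !IH by lia; apply omega_cyl_children.
Qed.

Lemma cyl_measure_le_omega I m q : (m <= n)%nat -> cyl_measure n I m q <= omega_cyl N m q.
Proof.
  intros Hmn; rewrite <- (cyl_measure_setT m q Hmn); apply fsum_le; intros i _.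
  pose proof (ind_bounds (cyl_in N I n (q * 2 ^ (n - m) + i))).
  pose proof (omega_cyl_pos n (q * 2 ^ (n - m) + i)).
  rewrite (ind_true _ (cyl_in_setT _ _)); nra.
Qed.

Lemma cyl_integral_full I f m q : (m <= n)%nat -> cyl_measure n I m q = omega_cyl N m q ->
  cyl_integral n I f m q = cyl_integral n setT f m q.
Proof.
  intros Hmn Hfull; unfold cyl_integral, block_sum; apply fsum_ext; intros i Hi.
  rewrite (ind_true _ (cyl_in_setT _ _)).
  destruct (classic (cyl_in N I n (q * 2 ^ (n - m) + i))) as [Hin|Hout];
    [rewrite ind_true by exact Hin; reflexivity|exfalso].
  enough (cyl_measure n I m q < omega_cyl N m q) by lra.
  rewrite <- (cyl_measure_setT m q Hmn); apply (fsum_lt _ _ _ i); [|exact Hi|];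
    [intros j _|]; rewrite ?(ind_false _ Hout), (ind_true _ (cyl_in_setT _ _)).
  - pose proof (ind_bounds (cyl_in N I n (q * 2 ^ (n - m) + j))).
    pose proof (omega_cyl_pos n (q * 2 ^ (n - m) + j)); nra.
  - pose proof (omega_cyl_pos n (q * 2 ^ (n - m) + i)); lra.
Qed.

Lemma cyl_measure_meets I m q : (m <= n)%nat -> 0 < cyl_measure n I m q ->
  exists x, in_cyl m q x /\ I x.
Proof.
  intros Hmn H; apply fsum_pos_ex in H as [i [Hi Hpos]].
  set (c := (q * 2 ^ (n - m) + i)%nat) in Hpos.
  destruct (classic (cyl_in N I n c)) as [Hin|Hout];
    [|rewrite ind_false in Hpos by exact Hout; lra].
  exists (cleft N n c); split; [|apply Hin, cleft_in_cyl].
  apply (in_cyl_block m (n - m) q i); [exact Hi|].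
  replace (m + (n - m))%nat with n by lia; apply cleft_in_cyl.
Qed.

Lemma cyl_measure_misses I m q : (m <= n)%nat -> cyl_measure n I m q < omega_cyl N m q ->
  exists y, in_cyl m q y /\ ~ I y.
Proof.
  intros Hmn H; rewrite <- (cyl_measure_setT m q Hmn) in H.
  apply fsum_lt_ex in H as [i [Hi Hlt]].
  rewrite (ind_true _ (cyl_in_setT _ _)) in Hlt.
  set (c := (q * 2 ^ (n - m) + i)%nat) in Hlt.
  destruct (classic (cyl_in N I n c)) as [Hin|Hout]; [rewrite ind_true in Hlt by exact Hin; lra|].
  apply not_all_ex_not in Hout as [y Hy]; apply imply_to_and in Hy as [Hyc Hy].
  exists y; split; [|exact Hy].
  apply (in_cyl_block m (n - m) q i); [exact Hi|].
  replace (m + (n - m))%nat with n by lia; exact Hyc.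
Qed.

End Generation.

Lemma cyl_measure_mono_gen I n m q : (m <= n)%nat ->
  cyl_measure n I m q <= cyl_measure (S n) I m q.
Proof.
  intros Hmn; unfold cyl_integral; replace (S n - m)%nat with (S (n - m)) by lia.
  rewrite block_sum_double; apply fsum_le; intros i _.
  set (c := (q * 2 ^ (n - m) + i)%nat).
  pose proof (omega_cyl_children n c).
  destruct (classic (cyl_in N I n c)) as [Hin|Hout].
  - destruct (cyl_in_children I n c Hin) as [H0 H1].
    rewrite !ind_true by assumption; lra.
  - pose proof (ind_bounds (cyl_in N I (S n) (2 * c))).
    pose proof (ind_bounds (cyl_in N I (S n) (2 * c + 1))).
    pose proof (omega_cyl_pos (S n) (2 * c)); pose proof (omega_cyl_pos (S n) (2 * c + 1)).
    rewrite ind_false by exact Hout; nra.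
Qed.

Lemma cyl_measure_cv I m q : exists l, Un_cv (fun n => cyl_measure n I m q) l.
Proof.
  destruct (growing_cv (fun n => cyl_measure (n + m) I m q)) as [l Hl].
  - intros n; apply cyl_measure_mono_gen; lia.
  - exists (omega_cyl N m q); intros x [n ->]; apply cyl_measure_le_omega; lia.
  - exists l; exact (CV_shift _ m l Hl).
Qed.

Lemma omega_hat_cv I : Un_cv (fun n => cyl_measure n I 0 0) (omega_hat N I).
Proof.
  destruct (cyl_measure_cv I 0 0) as [l Hl].
  assert (Ha : Un_cv (omega_approx N I (fun _ => 1)) l).
  { eapply (Un_cv_eventually _ _ _ O); [|exact Hl]; intros; apply omega_approx_cyl_integral. }
  unfold omega_hat; rewrite (lim_eq _ l Ha); exact Hl.
Qed.

Lemma cyl_measure_sibling I n m c : (m < n)%nat ->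
  cyl_measure n I (S m) c + cyl_measure n I (S m) (sibling c) = cyl_measure n I m (Nat.div2 c).
Proof. intros Hmn; rewrite (cyl_integral_split n _ _ m) by exact Hmn; case_child c; ring. Qed.

(* Cylinders covered by [I] (at generation [n]) contribute exactly [cyl_hilbert];
   the others are only controlled through their measure. *)
Definition partial_measure (n : nat) (I : R -> Prop) (m q : nat) : R :=
  if Req_EM_T (cyl_measure n I m q) (omega_cyl N m q) then 0 else cyl_measure n I m q.

Definition full_hilbert (n : nat) (I : R -> Prop) (m q : nat) : R :=
  if Req_EM_T (cyl_measure n I m q) (omega_cyl N m q) then cyl_hilbert m q else 0.

Lemma partial_measure_eq n I m q : cyl_measure n I m q <> omega_cyl N m q ->
  partial_measure n I m q = cyl_measure n I m q.
Proof. intros E; unfold partial_measure; destruct Req_EM_T; [contradiction|reflexivity]. Qed.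

Lemma partial_measure_nonneg n I m q : 0 <= partial_measure n I m q.
Proof. unfold partial_measure; destruct Req_EM_T; [lra|apply cyl_measure_nonneg]. Qed.

Lemma partial_measure_le n I m q : partial_measure n I m q <= cyl_measure n I m q.
Proof. unfold partial_measure; destruct Req_EM_T; [apply cyl_measure_nonneg|lra]. Qed.

Lemma Rabs_le_full_hilbert n I m c x B : Rabs (x - full_hilbert n I (S m) c) <= B ->
  Rabs x <= B + INR N ^ m * cyl_measure n I (S m) c.
Proof.
  intros H; pose proof INR_N_ge16; pose proof (cyl_measure_nonneg n I (S m) c).
  assert (0 < INR N ^ m) by (apply pow_lt; lra).
  unfold full_hilbert in H; destruct Req_EM_T as [E|E]; [|rewrite Rminus_0_r in H; nra].
  rewrite cyl_hilbert_child in H; rewrite E.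
  assert (Rabs (side c * INR N ^ m * omega_cyl N (S m) c) = INR N ^ m * omega_cyl N (S m) c).
  { pose proof (omega_cyl_pos (S m) c).
    rewrite !Rabs_mult, Rabs_side, !Rabs_pos_eq by lra; ring. }
  pose proof (Rabs_triang (x - side c * INR N ^ m * omega_cyl N (S m) c)
    (side c * INR N ^ m * omega_cyl N (S m) c)).
  replace (x - _ + _) with x in * by ring; lra.
Qed.

(** * The flattened kernel at the centers *)

Section Kernel.

Variables (rho : R) (K : R -> R).
Hypothesis Hrho : 2 / 3 <= rho < 1.
Hypothesis HK : is_flat_kernel N rho K.

(* The scaling law reduces this to [N^m x] in [3/8, 1], inside the flat region
   [K = 1] because [sqrt (rho^2 N) >= 8/3]. *)
Lemma flat_kernel_value m x : 3 / 8 * / INR N ^ m <= x <= / INR N ^ m -> K x = INR N ^ m.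
Proof.
  intros Hx; destruct HK as [_ [_ [_ [_ [_ [Hflat [Hscale _]]]]]]].
  pose proof INR_N_ge16 as HN16; set (r := INR N) in *.
  assert (Hsq : 4 <= sqrt r) by (rewrite <- (sqrt_square 4) by lra; apply sqrt_le_1_alt; lra).
  assert (Hp : 0 < / r ^ m) by apply inv_pow_pos.
  assert (Hrm : 0 < r ^ m) by (apply pow_lt; lra).
  assert (Hflat_lo : / sqrt (rho ^ 2 * r) <= 3 / 8).
  { replace (3 / 8) with (/ (8 / 3)) by field; apply Rinv_le_contravar; [lra|].
    rewrite <- (sqrt_square (8 / 3)) by lra; apply sqrt_le_1_alt; nra. }
  assert (Hxr : 3 / 8 <= x * r ^ m <= 1).
  { replace x with (x * r ^ m * / r ^ m) in Hx by (field; lra).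
    split; apply (Rmult_le_reg_r (/ r ^ m)); lra. }
  rewrite (Hscale (- Z.of_nat m)%Z x).
  - rewrite Z.opp_involutive, <- pow_powerRZ, Rmult_comm, Hflat; [ring|].
    pose proof (sqrt_pos (rho ^ 2 * r)); split; [lra|].
    apply Rle_trans with (8 / 3); [lra|].
    rewrite <- (sqrt_square (8 / 3)) by lra; apply sqrt_le_1_alt; nra.
  - rewrite powerRZ_neg', <- pow_powerRZ; split; [|nra].
    apply Rle_trans with (/ r ^ m / 4); [|lra].
    unfold Rdiv; apply Rmult_le_compat_l; [lra|]; apply Rinv_le_contravar; lra.
Qed.

Lemma flat_kernel_value_neg m x :
  3 / 8 * / INR N ^ m <= x <= / INR N ^ m -> K (- x) = - INR N ^ m.
Proof.
  intros Hx; destruct HK as [_ [_ [_ [_ [_ [_ [_ Hodd]]]]]]].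
  pose proof (inv_pow_pos m); rewrite Hodd by nra; f_equal; now apply flat_kernel_value.
Qed.

Section KernelIntegral.

Variable n : nat.

Lemma cyl_integral_kernel_step I z m c : (m < n)%nat -> in_cyl (S m) c z ->
  cyl_integral n I (fun y => K (z - y)) m (Nat.div2 c) =
  cyl_integral n I (fun y => K (z - y)) (S m) c
  - side c * INR N ^ m * cyl_measure n I (S m) (sibling c).
Proof.
  intros Hmn Hz; pose proof (inv_pow_S_le m); pose proof (inv_pow_pos (S m)).
  case_child c; rewrite cyl_integral_split by exact Hmn.
  - rewrite (cyl_integral_const n I _ (- INR N ^ m) (S m) (2 * q + 1)); [ring|lia|].
    intros y Hy; rewrite in_cyl_left in Hz; rewrite in_cyl_right in Hy.
    replace (z - y) with (- (y - z)) by ring; apply flat_kernel_value_neg; lra.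
  - rewrite (cyl_integral_const n I _ (INR N ^ m) (S m) (2 * q)); [ring|lia|].
    intros y Hy; rewrite in_cyl_right in Hz; rewrite in_cyl_left in Hy.
    apply flat_kernel_value; lra.
Qed.

Lemma cyl_integral_kernel_center I m j : (m < n)%nat ->
  cyl_integral n I (fun y => K (center N m j - y)) m j =
  INR N ^ m * (cyl_measure n I (S m) (2 * j) - cyl_measure n I (S m) (2 * j + 1)).
Proof.
  intros Hmn; pose proof (inv_pow_S_le m); pose proof (inv_pow_pos (S m)).
  rewrite cyl_integral_split by exact Hmn; unfold center.
  rewrite (cyl_integral_const n I _ (INR N ^ m) (S m) (2 * j)),
    (cyl_integral_const n I _ (- INR N ^ m) (S m) (2 * j + 1)); [ring|lia| |lia|].
  - intros y Hy; rewrite in_cyl_right in Hy.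
    replace (_ - y) with (- (y - (cleft N m j + / INR N ^ m / 2))) by ring.
    apply flat_kernel_value_neg; lra.
  - intros y Hy; rewrite in_cyl_left in Hy; apply flat_kernel_value; lra.
Qed.

Lemma cyl_integral_kernel_setT d m j : (m + d < n)%nat ->
  cyl_integral n setT (fun y => K (center N (m + d) j - y)) m (j / 2 ^ d)
  = cyl_hilbert m (j / 2 ^ d).
Proof.
  revert m; induction d as [|d IH]; intros m Hmn.
  - rewrite Nat.add_0_r in *; rewrite Nat.pow_0_r, Nat.div_1_r.
    rewrite cyl_integral_kernel_center, !cyl_measure_setT by lia; reflexivity.
  - rewrite <- Nat.add_succ_comm in *; rewrite ancestor_S.
    rewrite cyl_integral_kernel_step by (lia || apply center_in_ancestor).
    rewrite IH, cyl_measure_setT, cyl_hilbert_child, cyl_hilbert_parent by lia; ring.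
Qed.

Lemma cyl_integral_kernel_full I d m j : (m + d < n)%nat ->
  cyl_measure n I m (j / 2 ^ d) = omega_cyl N m (j / 2 ^ d) ->
  cyl_integral n I (fun y => K (center N (m + d) j - y)) m (j / 2 ^ d) = cyl_hilbert m (j / 2 ^ d).
Proof.
  intros Hmn Hfull.
  rewrite cyl_integral_full, cyl_integral_kernel_setT by (auto || lia); reflexivity.
Qed.

Lemma cyl_integral_kernel_bound I d m j : (m + d < n)%nat ->
  Rabs (cyl_integral n I (fun y => K (center N (m + d) j - y)) m (j / 2 ^ d)
        - full_hilbert n I m (j / 2 ^ d))
  <= path_sum (fun t q => INR N ^ t * partial_measure n I t q) m d j.
Proof.
  pose proof INR_N_ge16.
  assert (Hpath : forall m d, 0 <= path_sum (fun t q => INR N ^ t * partial_measure n I t q) m d j).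
  { intros; apply path_sum_nonneg; intros t q.
    apply Rmult_le_pos; [apply pow_le; lra|apply partial_measure_nonneg]. }
  revert m; induction d as [|d IH]; intros m Hmn.
  all: unfold full_hilbert; destruct Req_EM_T as [E|E];
    [rewrite cyl_integral_kernel_full, Rminus_diag, Rabs_R0 by assumption; apply Hpath|].
  all: rewrite Rminus_0_r; assert (0 < INR N ^ m) by (apply pow_lt; lra).
  - rewrite Nat.add_0_r in *; rewrite Nat.pow_0_r, Nat.div_1_r in *.
    rewrite path_sum_0, cyl_integral_kernel_center by exact Hmn.
    rewrite partial_measure_eq by exact E.
    rewrite Rabs_mult, Rabs_pos_eq by lra; apply Rmult_le_compat_l; [lra|].
    rewrite (cyl_integral_split n I _ m j Hmn).
    pose proof (cyl_measure_nonneg n I (S m) (2 * j)).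
    pose proof (cyl_measure_nonneg n I (S m) (2 * j + 1)).
    unfold Rabs; destruct Rcase_abs; lra.
  - rewrite <- Nat.add_succ_comm in *; rewrite path_sum_top, ancestor_S in *.
    set (c := (j / 2 ^ d)%nat) in *.
    rewrite cyl_integral_kernel_step by (lia || apply center_in_ancestor).
    pose proof (Rabs_le_full_hilbert n I m c _ _ (IH (S m) Hmn)) as Hc.
    rewrite partial_measure_eq, <- (cyl_measure_sibling I n m c) by (exact E || lia).
    pose proof (cyl_measure_nonneg n I (S m) (sibling c)).
    set (x := cyl_integral n I (fun y => K (center N (S m + d) j - y)) (S m) c) in *.
    set (s := side c * INR N ^ m * cyl_measure n I (S m) (sibling c)).
    assert (Hs : Rabs s = INR N ^ m * cyl_measure n I (S m) (sibling c)).
    { unfold s; rewrite !Rabs_mult, (Rabs_pos_eq (INR N ^ m)), (Rabs_pos_eq (cyl_measure _ _ _ _))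
        by lra.
      rewrite Rabs_side; ring. }
    pose proof (Rabs_triang x (- s)); rewrite Rabs_Ropp in *; unfold Rminus; lra.
Qed.

End KernelIntegral.

Lemma cyl_integral_kernel_cv I d m j :
  exists l, Un_cv (fun n => cyl_integral n I (fun y => K (center N (m + d) j - y)) m (j / 2 ^ d)) l.
Proof.
  revert m; induction d as [|d IH]; intros m.
  - rewrite Nat.add_0_r, Nat.pow_0_r, Nat.div_1_r.
    destruct (cyl_measure_cv I (S m) (2 * j)) as [l0 H0].
    destruct (cyl_measure_cv I (S m) (2 * j + 1)) as [l1 H1].
    exists (INR N ^ m * (l0 - l1)).
    eapply (Un_cv_eventually _ _ _ (S m)); [|apply Un_cv_scal, CV_minus; eassumption].
    intros; apply cyl_integral_kernel_center; lia.
  - rewrite <- Nat.add_succ_comm, ancestor_S; set (c := (j / 2 ^ d)%nat).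
    destruct (IH (S m)) as [l0 H0].
    destruct (cyl_measure_cv I (S m) (sibling c)) as [l1 H1].
    exists (l0 - side c * INR N ^ m * l1).
    eapply (Un_cv_eventually _ _ _ (S m)); [|apply CV_minus; [exact H0|apply Un_cv_scal, H1]].
    intros; apply cyl_integral_kernel_step; [lia|apply center_in_ancestor].
Qed.

Lemma H_flat_center_cv I k j : (j < 2 ^ k)%nat ->
  Un_cv (omega_approx N I (fun y => K (center N k j - y))) (H_flat N K I (center N k j)).
Proof.
  intros Hj; destruct (cyl_integral_kernel_cv I k 0 j) as [l Hl].
  rewrite Nat.div_small in Hl by exact Hj.
  assert (Ha : Un_cv (omega_approx N I (fun y => K (center N k j - y))) l).
  { eapply (Un_cv_eventually _ _ _ O); [|exact Hl]; intros; apply omega_approx_cyl_integral. }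
  unfold H_flat; rewrite (lim_eq _ l Ha); exact Ha.
Qed.

Lemma omega_approx_kernel_bound I n k j : (k < n)%nat -> (j < 2 ^ k)%nat ->
  Rabs (omega_approx N I (fun y => K (center N k j - y)) n)
  <= path_sum (fun t q => INR N ^ t * partial_measure n I t q) 0 k j.
Proof.
  intros Hkn Hj; pose proof (cyl_integral_kernel_bound n I k 0 j Hkn) as H.
  rewrite Nat.div_small in H by exact Hj.
  replace (full_hilbert n I 0 0) with 0 in H
    by (unfold full_hilbert; rewrite cyl_hilbert_root; destruct Req_EM_T; reflexivity).
  rewrite omega_approx_cyl_integral, <- (Rminus_0_r (cyl_integral _ _ _ _ _)); exact H.
Qed.

End Kernel.

(** * Cylinders partially covered by an interval *)

(* By [potential_step], [potential t] bounds [sum_i min (t_i, / t_i)] along any sequence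
   with [t_0 = t] and [t_(i+1) <= 17/32 t_i]. *)
Definition potential (t : R) : R :=
  if Rle_dec t 1 then 32 / 15 * t else 32 / 15 + 1 + 17 / 15 * (1 - / t).

Lemma potential_bounds t : 0 < t -> 0 <= potential t <= 64 / 15.
Proof.
  intros Ht; unfold potential; destruct Rle_dec; [lra|].
  assert (0 < / t < 1); [|lra].
  split; [apply Rinv_0_lt_compat|rewrite <- Rinv_1; apply Rinv_1_lt_contravar]; lra.
Qed.

Lemma potential_mono s t : 0 < s -> s <= t -> potential s <= potential t.
Proof.
  intros Hs Hst; unfold potential; destruct (Rle_dec s 1); destruct (Rle_dec t 1); try lra.
  - assert (/ t < 1) by (rewrite <- Rinv_1; apply Rinv_1_lt_contravar; lra); lra.
  - assert (/ t <= / s) by (apply Rinv_le_contravar; lra); lra.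
Qed.

Lemma potential_step t F : 0 < t -> 0 <= F -> F <= t -> F <= / t ->
  F + potential (17 / 32 * t) <= potential t.
Proof.
  intros Ht HF0 HFt HFi; unfold potential.
  destruct (Rle_dec (17 / 32 * t) 1); destruct (Rle_dec t 1); try lra.
  - assert (/ t < 1) by (rewrite <- Rinv_1; apply Rinv_1_lt_contravar; lra); nra.
  - replace (/ (17 / 32 * t)) with (32 / 17 * / t) by (field; lra); lra.
Qed.

Section Packing.

Variables (n : nat) (I : R -> Prop).
Hypothesis HI : is_interval I.

Definition has_left_end (m q : nat) : Prop :=
  exists x y, in_cyl m q x /\ in_cyl m q y /\ x < y /\ ~ I x /\ I y.
Definition has_right_end (m q : nat) : Prop :=
  exists x y, in_cyl m q x /\ in_cyl m q y /\ x < y /\ I x /\ ~ I y.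
Definition end_count (m q : nat) : R := ind (has_left_end m q) + ind (has_right_end m q).

Lemma end_count_bounds m q : 0 <= end_count m q <= 2.
Proof.
  unfold end_count; pose proof (ind_bounds (has_left_end m q));
    pose proof (ind_bounds (has_right_end m q)); lra.
Qed.

Lemma end_count_children m q :
  end_count (S m) (2 * q) + end_count (S m) (2 * q + 1) <= end_count m q.
Proof.
  assert (Hup : forall c x, in_cyl (S m) c x -> c = (2 * q)%nat \/ c = (2 * q + 1)%nat ->
            in_cyl m q x).
  { intros c x Hx [-> | ->]; apply in_cyl_parent in Hx;
      rewrite ?Nat.div2_double, ?Nat.div2_odd' in Hx; exact Hx. }
  unfold end_count.
  enough (ind (has_left_end (S m) (2 * q)) + ind (has_left_end (S m) (2 * q + 1))
            <= ind (has_left_end m q) /\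
          ind (has_right_end (S m) (2 * q)) + ind (has_right_end (S m) (2 * q + 1))
            <= ind (has_right_end m q)) by lra.
  split; apply ind_add_le;
    try (intros (x & y & Hx & Hy & H); exists x, y; split; [|split];
         [apply (Hup _ x Hx)|apply (Hup _ y Hy)|]; auto).
  - intros [(x0 & y0 & _ & Hy0 & _ & _ & Iy0) (x1 & y1 & Hx1 & _ & Hxy1 & Ix1 & Iy1)].
    apply Ix1, (HI y0 x1 y1); auto; split; [|lra].
    left; apply (in_cyl_left_lt_right m q); assumption.
  - intros [(x0 & y0 & _ & Hy0 & Hxy0 & Ix0 & Iy0) (x1 & _ & Hx1 & _ & _ & Ix1 & _)].
    apply Iy0, (HI x0 y0 x1); auto; split; [lra|].
    left; apply (in_cyl_left_lt_right m q); assumption.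
Qed.

Lemma end_count_partial m q : (m <= n)%nat -> partial_measure n I m q <> 0 -> 1 <= end_count m q.
Proof.
  intros Hmn; unfold partial_measure; destruct Req_EM_T as [E|E]; [contradiction|intros Hpos].
  pose proof (cyl_measure_nonneg n I m q); pose proof (cyl_measure_le_omega n I m q Hmn).
  destruct (cyl_measure_meets n I m q Hmn) as [x [Hx Ix]]; [lra|].
  destruct (cyl_measure_misses n I m q Hmn) as [y [Hy Iy]]; [lra|].
  unfold end_count; pose proof (ind_bounds (has_left_end m q));
    pose proof (ind_bounds (has_right_end m q)).
  destruct (Rtotal_order x y) as [Hxy|[<-|Hxy]]; [|contradiction|].
  - rewrite (ind_true (has_right_end m q)) by (exists x, y; tauto); lra.
  - rewrite (ind_true (has_left_end m q)) by (exists y, x; tauto); lra.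
Qed.

Lemma cyl_measure_le_root k j : (k <= n)%nat -> (j < 2 ^ k)%nat ->
  cyl_measure n I k j <= cyl_measure n I 0 0.
Proof.
  revert j; induction k as [|k IH]; intros j Hkn Hj.
  - simpl in Hj; replace j with O by lia; lra.
  - assert (Hd : (Nat.div2 j < 2 ^ k)%nat).
    { rewrite Nat.div2_div; apply Nat.Div0.div_lt_upper_bound; rewrite Nat.pow_succ_r' in Hj; lia. }
    pose proof (IH (Nat.div2 j) ltac:(lia) Hd).
    rewrite <- (cyl_measure_sibling I n k j) in * by lia.
    pose proof (cyl_measure_nonneg n I (S k) (sibling j)); lra.
Qed.

Lemma partial_square_bounds m j M : (m <= n)%nat -> 0 < M -> cyl_measure n I m j <= M ->
  let F := partial_measure n I m j ^ 2 / omega_cyl N m j / M in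
  0 <= F <= omega_cyl N m j / M /\ F <= M / omega_cyl N m j.
Proof.
  intros Hmn HM Hmu F; pose proof (omega_cyl_pos m j).
  pose proof (partial_measure_nonneg n I m j); pose proof (partial_measure_le n I m j).
  pose proof (cyl_measure_le_omega n I m j Hmn).
  set (w := omega_cyl N m j) in *; set (p := partial_measure n I m j) in *.
  assert (HwM : 0 < / (w * M)) by (apply Rinv_0_lt_compat; nra).
  unfold F; replace (p ^ 2 / w / M) with (p ^ 2 * / (w * M)) by (field; lra).
  replace (w / M) with (w * w * / (w * M)) by (field; lra).
  replace (M / w) with (M * M * / (w * M)) by (field; lra).
  repeat split; [|apply Rmult_le_compat_r; [lra|]; nra ..]; nra.
Qed.

Lemma potential_child m c M : 0 < M ->
  potential (omega_cyl N (S m) c / M) <= potential (17 / 32 * (omega_cyl N m (Nat.div2 c) / M)).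
Proof.
  intros HM; pose proof (omega_cyl_child_bounds m c) as [_ Hc]; pose proof (omega_cyl_pos (S m) c).
  apply potential_mono; [apply Rdiv_lt_0_compat; lra|].
  unfold Rdiv; rewrite <- Rmult_assoc; apply Rmult_le_compat_r; [|exact Hc].
  left; apply Rinv_0_lt_compat; lra.
Qed.

(* With [t = omega(I^m_j) / M], the square term is at most [M min (t, / t)]; each child has
   [omega <= 17/32 omega(I^m_j)], and the children share the ends of [I] lying in I^m_j. *)
Lemma partial_energy_step m j M : (m <= n)%nat -> 0 < M -> cyl_measure n I m j <= M ->
  partial_measure n I m j ^ 2 / omega_cyl N m j
  + end_count (S m) (2 * j) * M * potential (omega_cyl N (S m) (2 * j) / M)
  + end_count (S m) (2 * j + 1) * M * potential (omega_cyl N (S m) (2 * j + 1) / M)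
  <= end_count m j * M * potential (omega_cyl N m j / M).
Proof.
  intros Hmn HM Hmu; pose proof (omega_cyl_pos m j).
  pose proof (partial_square_bounds m j M Hmn HM Hmu) as [[HF0 HFt] HFi].
  set (F := partial_measure n I m j ^ 2 / omega_cyl N m j / M) in *.
  set (t := omega_cyl N m j / M) in *.
  assert (Ht : 0 < t) by (apply Rdiv_lt_0_compat; lra).
  rewrite <- (Rinv_div (omega_cyl N m j) M) in HFi; fold t in HFi.
  pose proof (potential_step t F Ht HF0 HFt HFi).
  pose proof (potential_child m (2 * j) M HM) as Hc0.
  pose proof (potential_child m (2 * j + 1) M HM) as Hc1.
  rewrite Nat.div2_double in Hc0; rewrite Nat.div2_odd' in Hc1; fold t in Hc0, Hc1.
  set (P := potential (17 / 32 * t)) in *.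
  assert (HP : 0 <= P) by (apply potential_bounds; lra).
  pose proof (end_count_children m j); pose proof (end_count_bounds m j).
  pose proof (end_count_bounds (S m) (2 * j)); pose proof (end_count_bounds (S m) (2 * j + 1)).
  assert (HMF : M * F <= end_count m j * (M * F)).
  { destruct (Req_dec (partial_measure n I m j) 0) as [Z|Z].
    - unfold F; rewrite Z; unfold Rdiv; lra.
    - pose proof (end_count_partial m j Hmn Z).
      assert (0 <= M * F) by (apply Rmult_le_pos; lra); nra. }
  replace (partial_measure n I m j ^ 2 / omega_cyl N m j) with (M * F) by (unfold F; field; lra).
  apply Rle_trans with (M * F + (end_count (S m) (2 * j) + end_count (S m) (2 * j + 1)) * M * P).
  { rewrite Rmult_plus_distr_r, Rmult_plus_distr_r, Rplus_assoc.
    apply Rplus_le_compat_l, Rplus_le_compat; apply Rmult_le_compat_l; nra. }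
  apply Rle_trans with (end_count m j * M * (F + P)); [|apply Rmult_le_compat_l; nra].
  assert (0 <= M * P) by nra; nra.
Qed.

Lemma partial_energy_le_bound K M : (K <= n)%nat -> 0 < M -> cyl_measure n I 0 0 <= M ->
  fsum (S K) (fun k => fsum (2 ^ k) (fun j => partial_measure n I k j ^ 2 / omega_cyl N k j))
  <= 128 / 15 * M.
Proof.
  intros HKn HM HmuM.
  set (V k := fsum (2 ^ k) (fun j => end_count k j * M * potential (omega_cyl N k j / M))).
  assert (HV : forall k, (k <= n)%nat ->
    fsum (2 ^ k) (fun j => partial_measure n I k j ^ 2 / omega_cyl N k j) + V (S k) <= V k).
  { intros k Hkn; unfold V; rewrite Nat.pow_succ_r', fsum_double, <- fsum_add.
    apply fsum_le; intros j Hj; rewrite <- Rplus_assoc; apply partial_energy_step; auto.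
    pose proof (cyl_measure_le_root k j Hkn Hj); lra. }
  assert (Hsum : forall K, (K <= n)%nat ->
    fsum (S K) (fun k => fsum (2 ^ k) (fun j => partial_measure n I k j ^ 2 / omega_cyl N k j))
    + V (S K) <= V O).
  { intros K'; induction K' as [|K' IH]; intros HK'.
    { change (fsum 1 ?f) with (0 + f O); cbv beta; pose proof (HV O HK'); lra. }
    change (fsum (S (S K')) ?f) with (fsum (S K') f + f (S K')).
    pose proof (HV (S K') HK'); pose proof (IH ltac:(lia)); lra. }
  assert (HV0 : V (S K) >= 0).
  { apply Rle_ge, fsum_nonneg; intros j _; pose proof (end_count_bounds (S K) j).
    pose proof (potential_bounds (omega_cyl N (S K) j / M)
      ltac:(apply Rdiv_lt_0_compat; [apply omega_cyl_pos|lra])).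
    apply Rmult_le_pos; [apply Rmult_le_pos|]; lra. }
  assert (V O <= 2 * M * (64 / 15)); [|pose proof (Hsum K HKn); lra].
  unfold V; rewrite Nat.pow_0_r; change (fsum 1 ?f) with (0 + f O); cbv beta; rewrite Rplus_0_l.
  pose proof (end_count_bounds 0 0).
  pose proof (potential_bounds (omega_cyl N 0 0 / M)
    ltac:(apply Rdiv_lt_0_compat; [apply omega_cyl_pos|lra])).
  apply Rmult_le_compat; nra.
Qed.

Lemma partial_energy_le K : (K <= n)%nat ->
  fsum (S K) (fun k => fsum (2 ^ k) (fun j => partial_measure n I k j ^ 2 / omega_cyl N k j))
  <= 128 / 15 * cyl_measure n I 0 0.
Proof.
  intros HKn; apply le_epsilon; intros eps Heps.
  pose proof (cyl_measure_nonneg n I 0 0).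
  pose proof (partial_energy_le_bound K (cyl_measure n I 0 0 + 15 / 128 * eps) HKn
    ltac:(lra) ltac:(lra)); lra.
Qed.

End Packing.

Lemma weight_nonneg k j : 0 <= weight N k j.
Proof.
  unfold weight; left; apply Rdiv_lt_0_compat; [apply inv_pow_pos|apply omega_cyl_pos].
Qed.

Lemma weight_child k c : weight N (S k) c <= / 8 * weight N k (Nat.div2 c).
Proof.
  pose proof INR_N_ge16; pose proof (omega_cyl_child_bounds k c) as [Hlo _].
  pose proof (omega_cyl_pos k (Nat.div2 c)).
  unfold weight, Rdiv; replace (2 * S k)%nat with (2 + 2 * k)%nat by lia.
  rewrite pow_add, Rinv_mult.
  assert (Ha : 0 < / INR N ^ 2 <= / 256).
  { split; [apply Rinv_0_lt_compat|apply Rinv_le_contravar]; simpl; nra. }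
  assert (Hu : 0 < / omega_cyl N (S k) c <= 32 / 15 * / omega_cyl N k (Nat.div2 c)).
  { split; [apply Rinv_0_lt_compat, omega_cyl_pos|].
    replace (32 / 15 * / omega_cyl N k (Nat.div2 c)) with (/ (15 / 32 * omega_cyl N k (Nat.div2 c)))
      by (field; lra).
    apply Rinv_le_contravar; lra. }
  assert (Hb : 0 < / INR N ^ (2 * k)) by apply inv_pow_pos.
  assert (Hv : 0 < / omega_cyl N k (Nat.div2 c)) by (apply Rinv_0_lt_compat; lra).
  assert (/ INR N ^ 2 * / omega_cyl N (S k) c <= / 256 * (32 / 15 * / omega_cyl N k (Nat.div2 c)))
    by (apply Rmult_le_compat; lra).
  nra.
Qed.

Lemma weight_mul_pow k j : weight N k j * (INR N ^ k) ^ 2 = / omega_cyl N k j.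
Proof.
  pose proof INR_N_ge16; pose proof (omega_cyl_pos k j).
  unfold weight; rewrite <- pow_mult, Nat.mul_comm; field; split; [lra|apply pow_nonzero; lra].
Qed.

Definition sigma_approx (K : R -> R) (I : R -> Prop) (K0 n : nat) : R :=
  fsum (S K0) (fun k => fsum (2 ^ k) (fun j =>
    ind (I (center N k j)) * weight N k j
    * omega_approx N I (fun y => K (center N k j - y)) n ^ 2)).

Lemma sigma_approx_cv rho K I K0 : 2 / 3 <= rho < 1 -> is_flat_kernel N rho K ->
  Un_cv (sigma_approx K I K0) (sigma_partial N K I K0).
Proof.
  intros Hrho HK; unfold sigma_approx, sigma_partial.
  apply fsum_cv; intros k _; apply fsum_cv; intros j Hj.
  apply Un_cv_scal, Un_cv_sq, (H_flat_center_cv rho K Hrho HK I k j Hj).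
Qed.

Lemma sigma_approx_le rho K I K0 n : 2 / 3 <= rho < 1 -> is_flat_kernel N rho K ->
  is_interval I -> (K0 < n)%nat -> sigma_approx K I K0 n <= 512 / 15 * cyl_measure n I 0 0.
Proof.
  intros Hrho HK HI Hn; pose proof INR_N_ge16.
  set (a t q := INR N ^ t * partial_measure n I t q).
  apply Rle_trans with
    (fsum (S K0) (fun k => fsum (2 ^ k) (fun j => weight N k j * path_sum a 0 k j ^ 2))).
  { apply fsum_le; intros k Hk; apply fsum_le; intros j Hj.
    pose proof (omega_approx_kernel_bound rho K Hrho HK I n k j ltac:(lia) Hj) as Hb.
    pose proof (weight_nonneg k j); pose proof (ind_bounds (I (center N k j))).
    set (h := omega_approx N I _ n) in *.
    assert (h ^ 2 <= path_sum a 0 k j ^ 2).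
    { rewrite <- !Rsqr_pow2, (Rsqr_abs h); apply Rsqr_incr_1; [exact Hb|apply Rabs_pos|].
      apply Rle_trans with (Rabs h); [apply Rabs_pos|exact Hb]. }
    assert (0 <= h ^ 2) by apply pow2_ge_0.
    assert (ind (I (center N k j)) * (weight N k j * h ^ 2) <= 1 * (weight N k j * h ^ 2))
      by (apply Rmult_le_compat_r; [apply Rmult_le_pos|]; lra).
    nra. }
  eapply Rle_trans; [apply weighted_path_sum_sq; [apply weight_nonneg|apply weight_child]|].
  replace (fsum (S K0) (fun k => fsum (2 ^ k) (fun j => weight N k j * a k j ^ 2)))
    with (fsum (S K0) (fun k =>
            fsum (2 ^ k) (fun j => partial_measure n I k j ^ 2 / omega_cyl N k j))).
  - pose proof (partial_energy_le n I HI K0 ltac:(lia)); lra.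
  - apply fsum_ext; intros k _; apply fsum_ext; intros j _; unfold a.
    rewrite Rpow_mult_distr, <- Rmult_assoc, weight_mul_pow; unfold Rdiv; ring.
Qed.

End Cantor.

Theorem mainTheorem7 (N : nat) (rho : R) :
  (16 <= N)%nat -> 2 / 3 <= rho < 1 ->
  forall K : R -> R, is_flat_kernel N rho K ->
  exists C : R, forall I : R -> Prop, is_interval I ->
    forall K0 : nat, sigma_partial N K I K0 <= C * omega_hat N I.
Proof.
  intros HN Hrho K HK; exists (512 / 15); intros I HI K0.
  apply (Rle_cv_lim (Un := fun n => sigma_approx N K I K0 (n + S K0))
                    (Vn := fun n => 512 / 15 * cyl_integral N (n + S K0) I (fun _ => 1) 0 0)).
  - intros n; apply (sigma_approx_le N HN rho); auto; lia.
  - apply CV_shift', (sigma_approx_cv N HN rho K I K0 Hrho HK).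
  - apply Un_cv_scal, (CV_shift' (fun n => cyl_integral N n I (fun _ => 1) 0 0)), omega_hat_cv, HN.
Qed.
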